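(* Let $G=(V,E)$ be a finite graph with $V=\{1,\dots,n\}$, special vertex $i\in V$, symmetric edge weights $w_E:V\times V\to[0,\infty)$ with $w_E(u,v)=0$ whenever $uv\notin E$, and vertex weights $w_V:V\to[0,\infty)$ not identically zero. Suppose $G$ is positively connected. Then a function $g:V\to\mathbb{R}$ with $g(i)=0$ and $\|g\|_w=1$ is a solution of $$\min_{\|g\|_w=1,\ g(i)=0}\ \sum_{jk\in E} w_E(j,k)\,(g(k)-g(j))^2$$ if and only if the vector $(g(j))_{j\in V\setminus\{i\}}$ is an eigenvector of $L_i^{-1}W_{V,i}$ associated with its largest eigenvalue.
   Context: $\|g\|_w=\sqrt{\sum_{u\in V}w_V(u)g(u)^2}$. Each edge is counted once in the sum. $L=D-W_E$ is the weighted Laplacian, where $W_E=(w_E(u,v))$ and $D$ is diagonal with $d(k)=\sum_j w_E(k,j)$; $L_i$ is $L$ with row and column $i$ deleted (it is invertible when $G$ is positively connected); $W_{V,i}$ is the diagonal matrix of $w_V$ with row and column $i$ deleted. $G$ is positively connected if any two vertices are joined by a path all of whose edges have positive weight. The eigenvalues of $L_i^{-1}W_{V,i}$ are real. *)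

From HB Require Import structures.
From mathcomp Require Import all_boot all_order all_algebra.
Set Implicit Arguments. Unset Strict Implicit. Unset Printing Implicit Defensive.
Import Order.TTheory GRing.Theory Num.Theory.
Local Open Scope ring_scope.

(* Vertices V = {1..n} are represented by 'I_n. *)
Section Defs.
Variables (R : rcfType) (n : nat).

Definition wnorm (wV : 'I_n -> R) (g : 'I_n -> R) : R :=
  Num.sqrt (\sum_(u < n) wV u * g u ^+ 2).

(* sum over edges jk in E, each (unordered) edge counted once *)
Definition energy (e : rel 'I_n) (wE : 'I_n -> 'I_n -> R) (g : 'I_n -> R) : R :=
  \sum_(j < n) \sum_(k < n | (j < k)%N && e j k) wE j k * (g k - g j) ^+ 2.

Definition laplacian (wE : 'I_n -> 'I_n -> R) : 'M[R]_n :=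
  \matrix_(k, j) ((if k == j then \sum_(l < n) wE k l else 0) - wE k j).

Definition Lred (wE : 'I_n -> 'I_n -> R) (i : 'I_n) : 'M[R]_n.-1 :=
  row' i (col' i (laplacian wE)).

Definition WVred (wV : 'I_n -> R) (i : 'I_n) : 'M[R]_n.-1 :=
  row' i (col' i (diag_mx (\row_u wV u))).

Definition pos_connected (wE : 'I_n -> 'I_n -> R) : Prop :=
  forall u v : 'I_n, connect (fun a b => 0 < wE a b) u v.

End Defs.

Section Eig.
Variables (R : rcfType) (m : nat).
Definition is_eigvec (M : 'M[R]_m) (x : 'cV[R]_m) (lam : R) : Prop :=
  x != 0 /\ M *m x = lam *: x.
Definition is_eigval (M : 'M[R]_m) (lam : R) : Prop :=
  exists x, is_eigvec M x lam.
Definition is_largest_eigval (M : 'M[R]_m) (lam : R) : Prop :=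
  is_eigval M lam /\ forall mu, is_eigval M mu -> mu <= lam.
End Eig.

(* Restricted to functions vanishing at [i], the energy and the squared
   weighted norm are the quadratic forms of [L_i] and [W_{V,i}], and [L_i] is
   positive definite because [G] is positively connected.  Minimising
   [x^T L_i x] subject to [x^T W_{V,i} x = 1] thus amounts to maximising the
   Rayleigh quotient [x^T W_{V,i} x / x^T L_i x], whose maximisers are exactly
   the eigenvectors of [L_i^-1 W_{V,i}] for its largest eigenvalue: a maximiser
   is an eigenvector by Lagrange multipliers, and the maximum is attained over
   any real closed field by induction on the dimension, splitting off a real
   generalized eigenvector built from the real and imaginary parts of a
   complex one. *)

From mathcomp Require Import all_boot all_order all_algebra.
From mathcomp Require Import spectral.
From mathcomp Require Import ring lra complex.
Set Implicit Arguments. Unset Strict Implicit. Unset Printing Implicit Defensive.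
Import Order.TTheory GRing.Theory Num.Theory.
Local Open Scope ring_scope.

Section QuadraticForms.
Variable R : rcfType.

Definition bform m (B : 'M[R]_m) (x y : 'cV[R]_m) : R := (x^T *m B *m y) 0 0.
Definition qform m (B : 'M[R]_m) (x : 'cV[R]_m) : R := bform B x x.
Definition posdef m (L : 'M[R]_m) : Prop := forall x, x != 0 -> 0 < qform L x.

Lemma bformDl m (B : 'M[R]_m) x y z : bform B (x + y) z = bform B x z + bform B y z.
Proof. by rewrite /bform linearD /= !mulmxDl mxE. Qed.

Lemma bformDr m (B : 'M[R]_m) x y z : bform B z (x + y) = bform B z x + bform B z y.
Proof. by rewrite /bform !mulmxDr mxE. Qed.

Lemma bformZl m (B : 'M[R]_m) a x y : bform B (a *: x) y = a * bform B x y.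
Proof. by rewrite /bform linearZ /= -!scalemxAl mxE. Qed.

Lemma bformZr m (B : 'M[R]_m) a x y : bform B y (a *: x) = a * bform B y x.
Proof. by rewrite /bform -!scalemxAr mxE. Qed.

Lemma bformC m (B : 'M[R]_m) x y : B^T = B -> bform B x y = bform B y x.
Proof.
move=> sB; rewrite /bform -[in LHS](trmxK (_ *m y)) mxE.
by rewrite !trmx_mul trmxK sB mulmxA.
Qed.

Lemma bform_mulmx m (B : 'M[R]_m) x y : bform B x y = bform 1%:M x (B *m y).
Proof. by rewrite /bform mulmx1 mulmxA. Qed.

Lemma bform1 m (x y : 'cV[R]_m) : bform 1%:M x y = \sum_j x j 0 * y j 0.
Proof. by rewrite /bform mulmx1 mxE; apply: eq_bigr => j _; rewrite mxE. Qed.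

Lemma qform_sum m (B : 'M[R]_m) x :
  qform B x = \sum_a \sum_b x a 0 * B a b * x b 0.
Proof.
rewrite /qform /bform mxE exchange_big /=; apply: eq_bigr => b _.
by rewrite mxE big_distrl; apply: eq_bigr => a _; rewrite mxE.
Qed.

Lemma qformZ m (B : 'M[R]_m) a x : qform B (a *: x) = a ^+ 2 * qform B x.
Proof. by rewrite /qform bformZl bformZr mulrA expr2. Qed.

Lemma qformDZ m (B : 'M[R]_m) x y t : B^T = B ->
  qform B (x + t *: y) = qform B x + 2 * t * bform B y x + t ^+ 2 * qform B y.
Proof.
move=> sB; rewrite /qform !bformDl !bformDr !bformZl !bformZr (bformC x y sB).
ring.
Qed.

Lemma qform1_eq0 m (x : 'cV[R]_m) : qform 1%:M x = 0 -> x = 0.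
Proof.
rewrite /qform bform1 => x0; apply/matrixP => j k; rewrite ord1 mxE.
apply/eqP; rewrite -sqrf_eq0 expr2; apply/eqP.
by apply: (psumr_eq0P _ x0) => // l _; rewrite -expr2 sqr_ge0.
Qed.

Lemma bform_eigen m (A L : 'M[R]_m) x y mu :
  A *m x = mu *: (L *m x) -> bform A y x = mu * bform L y x.
Proof. by move=> Ax; rewrite bform_mulmx Ax bformZr -bform_mulmx. Qed.

Lemma qform_mulmx m p (B : 'M[R]_m) (P : 'M[R]_(m, p)) (z : 'cV[R]_p) :
  qform (P^T *m B *m P) z = qform B (P *m z).
Proof. by rewrite /qform /bform trmx_mul !mulmxA. Qed.

Lemma qformx0 m (B : 'M[R]_m) : qform B 0 = 0.
Proof. by rewrite /qform /bform mulmx0 mxE. Qed.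

Lemma qform_ge0 m (L : 'M[R]_m) x : posdef L -> 0 <= qform L x.
Proof. by move=> pL; have [->|/pL/ltW //] := eqVneq x 0; rewrite qformx0. Qed.

Lemma posdef_unitmx m (L : 'M[R]_m) : posdef L -> L \in unitmx.
Proof.
move=> pL; rewrite unitmxE unitfE; apply/negP => /det0P [v nv vL0].
have := pL v^T; rewrite trmx_eq0 => /(_ nv).
by rewrite /qform /bform trmxK vL0 mul0mx mxE ltxx.
Qed.

Lemma linear_term_eq0 (b c : R) : (forall t, b * t + c * t ^+ 2 <= 0) -> b = 0.
Proof.
move=> le0; apply/eqP; apply: contraT => b_neq0.
have c1_gt0 : 0 < `|c| + 1 by rewrite ltr_wpDl.
set u := (`|c| + 1)^-1.
have := le0 (b * u).
have -> : b * (b * u) + c * (b * u) ^+ 2 = b ^+ 2 * u ^+ 2 * (`|c| + 1 + c).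
  by rewrite /u; field; rewrite gt_eqF.
have b2_gt0 : 0 < b ^+ 2 by rewrite lt_def sqrf_eq0 b_neq0 sqr_ge0.
have u2_gt0 : 0 < u ^+ 2 by rewrite exprn_gt0 // invr_gt0.
have cc_gt0 : 0 < `|c| + 1 + c by have := ler_norm (- c); rewrite normrN; lra.
by have := mulr_gt0 (mulr_gt0 b2_gt0 u2_gt0) cc_gt0; lra.
Qed.

Definition is_rayleigh_max m (A L : 'M[R]_m) (x0 : 'cV[R]_m) : Prop :=
  forall x, qform A x * qform L x0 <= qform A x0 * qform L x.

(* Lagrange multipliers: for the residual [d], the coefficient of [t] in
   [qform A (x0 + t d) * qform L x0 - qform A x0 * qform L (x0 + t d)], a
   quadratic in [t] that is never positive, is [2 * qform 1%:M d]. *)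
Lemma rayleigh_max_eigen m (A L : 'M[R]_m) x0 : A^T = A -> L^T = L ->
  is_rayleigh_max A L x0 -> qform L x0 *: (A *m x0) = qform A x0 *: (L *m x0).
Proof.
move=> sA sL x0_max.
set d := qform L x0 *: (A *m x0) - qform A x0 *: (L *m x0).
apply/eqP; rewrite -subr_eq0; apply/eqP; apply: qform1_eq0.
have dd : qform 1%:M d = qform L x0 * bform A d x0 - qform A x0 * bform L d x0.
  rewrite {1}/qform {2}/d bformDr bformZr -scaleN1r !bformZr -!bform_mulmx; ring.
have : 2 * qform 1%:M d = 0.
  apply: (@linear_term_eq0 _ (qform L x0 * qform A d - qform A x0 * qform L d)) => t.
  have := x0_max (x0 + t *: d); rewrite !qformDZ // dd; nra.
by move/eqP; rewrite mulf_eq0 pnatr_eq0 => /eqP.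
Qed.

End QuadraticForms.

Section RealGeneralizedEigen.
Variable R : rcfType.
Local Notation toC := (real_complex R).
Local Notation Re := (@complex.Re R).
Local Notation Im := (@complex.Im R).

Lemma map_Re_mul_real p q r (z : 'M[R[i]]_(p, q)) (B : 'M[R]_(q, r)) :
  map_mx Re (z *m map_mx toC B) = map_mx Re z *m B.
Proof.
apply/matrixP => a b; rewrite !mxE (@raddf_sum _ _ (Re : Rcomplex R -> R)).
by apply: eq_bigr => j _; rewrite !mxE; case: (z a j) => x y; simpc.
Qed.

Lemma map_Im_mul_real p q r (z : 'M[R[i]]_(p, q)) (B : 'M[R]_(q, r)) :
  map_mx Im (z *m map_mx toC B) = map_mx Im z *m B.
Proof.
apply/matrixP => a b; rewrite !mxE (@raddf_sum _ _ (Im : Rcomplex R -> R)).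
by apply: eq_bigr => j _; rewrite !mxE; case: (z a j) => x y; simpc.
Qed.

Lemma map_Re_scale p q (c : R[i]) (w : 'M[R[i]]_(p, q)) :
  map_mx Re (c *: w) = Re c *: map_mx Re w - Im c *: map_mx Im w.
Proof. by apply/matrixP => a b; rewrite !mxE; case: c (w a b) => ? ? [? ?]; simpc. Qed.

Lemma map_Im_scale p q (c : R[i]) (w : 'M[R[i]]_(p, q)) :
  map_mx Im (c *: w) = Re c *: map_mx Im w + Im c *: map_mx Re w.
Proof. by apply/matrixP => a b; rewrite !mxE; case: c (w a b) => ? ? [? ?]; simpc. Qed.

Lemma geneigen_of_pair m (A L : 'M[R]_m) (a b : 'cV[R]_m) r q :
  A^T = A -> L^T = L -> posdef L -> (a != 0) || (b != 0) ->
  A *m a = r *: (L *m a) - q *: (L *m b) ->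
  A *m b = r *: (L *m b) + q *: (L *m a) ->
  exists2 v : 'cV[R]_m, v != 0 & A *m v = r *: (L *m v).
Proof.
move=> sA sL pL ab_neq0 Aa Ab.
have q_mass : q * (qform L a + qform L b) = 0.
  have : bform 1%:M b (A *m a) = bform 1%:M a (A *m b).
    by rewrite -!bform_mulmx (bformC _ _ sA).
  rewrite Aa Ab bformDr bformDr -scaleN1r !bformZr -!bform_mulmx (bformC b a sL) /qform.
  by move=> ?; nra.
have mass_gt0 : 0 < qform L a + qform L b.
  have := qform_ge0 a pL; have := qform_ge0 b pL.
  by case/orP: ab_neq0 => /pL; lra.
have q0 : q = 0.
  by move: q_mass => /eqP; rewrite mulf_eq0 (gt_eqF mass_gt0) orbF => /eqP.
case/orP: ab_neq0 => [a_neq0|b_neq0]; [exists a | exists b] => //.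
  by rewrite Aa q0 scale0r subr0.
by rewrite Ab q0 scale0r addr0.
Qed.

(* The real and imaginary parts of a complex left eigenvector of [A L^-1]
   satisfy the hypotheses of [geneigen_of_pair]. *)
Lemma geneigen_exists k (A L : 'M[R]_k.+1) : A^T = A -> L^T = L -> posdef L ->
  exists mu, exists2 v : 'cV[R]_k.+1, v != 0 & A *m v = mu *: (L *m v).
Proof.
move=> sA sL pL.
have [c /eigenvalueP [z zM z_neq0]] :=
  eigenvalue_closed (map_mx toC (A *m invmx L)) (ltn0Sn k).
have zA : z *m map_mx toC A = c *: (z *m map_mx toC L).
  by rewrite -[A](mulmxKV (posdef_unitmx pL)) map_mxM mulmxA zM scalemxAl.
set a := (map_mx Re z)^T; set b := (map_mx Im z)^T.
have trE (B : 'M[R]_k.+1) w : B^T = B -> (w *m B)^T = B *m w^T.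
  by move=> sB; rewrite trmx_mul sB.
exists (Re c); apply: (geneigen_of_pair (a := a) (b := b) (q := Im c)) => //.
- rewrite /a /b !trmx_eq0 -negb_and; apply: contra z_neq0 => /andP[/eqP Rz /eqP Iz].
  apply/eqP/matrixP => p j; move/matrixP: Rz => /(_ p j); move/matrixP: Iz => /(_ p j).
  by rewrite !mxE; case: (z p j) => x y /= -> ->.
- have := congr1 (fun w => (map_mx Re w)^T) zA.
  rewrite /= map_Re_mul_real map_Re_scale !map_Re_mul_real !map_Im_mul_real.
  by rewrite linearB !linearZ /= !trE.
- have := congr1 (fun w => (map_mx Im w)^T) zA.
  rewrite /= map_Im_mul_real map_Im_scale !map_Re_mul_real !map_Im_mul_real.
  by rewrite linearD !linearZ /= !trE.
Qed.

End RealGeneralizedEigen.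

Section RayleighMaximum.
Variable R : rcfType.

Lemma hyperplane_param m (u : 'rV[R]_m) : u != 0 ->
  exists P : 'M[R]_(m, m.-1), [/\ u *m P = 0, forall z : 'cV_m.-1, P *m z = 0 -> z = 0 &
    forall y : 'cV_m, u *m y = 0 -> exists z, y = P *m z].
Proof.
move=> u_neq0.
have rk : \rank (kermx u^T) = m.-1 by rewrite mxrank_ker mxrank_tr rank_rV u_neq0 subn1.
have := row_base_free (kermx u^T); have := eq_row_base (kermx u^T).
move: (row_base _); rewrite rk => B BE B_free; exists B^T; split.
- by rewrite -[u]trmxK -trmx_mul; apply/eqP; rewrite trmx_eq0 -sub_kermx -BE.
- move=> z /(congr1 trmx); rewrite trmx_mul trmxK trmx0 => /eqP.
  by rewrite mulmx_free_eq0 // trmx_eq0 => /eqP.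
- move=> y /(congr1 trmx); rewrite trmx_mul trmx0 => /sub_kermxP; rewrite -BE => yB.
  by exists (y^T *m pinvmx B)^T; rewrite -trmx_mul mulmxKpV // trmxK.
Qed.

Lemma trmx_congr m p (B : 'M[R]_m) (P : 'M[R]_(m, p)) :
  (P^T *m B *m P)^T = P^T *m B^T *m P.
Proof. by rewrite !trmx_mul trmxK mulmxA. Qed.

Lemma posdef_congr m p (L : 'M[R]_m) (P : 'M[R]_(m, p)) :
  posdef L -> (forall z : 'cV_p, P *m z = 0 -> z = 0) -> posdef (P^T *m L *m P).
Proof.
move=> pL P_inj z z_neq0; rewrite qform_mulmx; apply: pL.
by apply: contra z_neq0 => /eqP/P_inj ->.
Qed.

Lemma bform_eq0 m (B : 'M[R]_m) x y : (bform B x y = 0) <-> (x^T *m B *m y = 0).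
Proof.
rewrite /bform; split=> [xy0|->]; last by rewrite mxE.
by apply/matrixP => a b; rewrite !ord1 xy0 mxE.
Qed.

Lemma qform_orthD m (L : 'M[R]_m) v y t : L^T = L -> bform L v y = 0 ->
  qform L (y + t *: v) = qform L y + t ^+ 2 * qform L v.
Proof. by move=> sL vy; rewrite qformDZ // vy; ring. Qed.

Lemma qform_geneigen_orthD m (A L : 'M[R]_m) v mu y t :
  A^T = A -> L^T = L -> A *m v = mu *: (L *m v) -> bform L v y = 0 ->
  qform A (y + t *: v) = qform A y + t ^+ 2 * (mu * qform L v).
Proof.
move=> sA sL Av vy; rewrite qformDZ // (bformC v y sA) (bform_eigen y Av).
by rewrite (bformC y v sL) vy /qform (bform_eigen v Av); ring.
Qed.

Lemma orth_decomp m (L : 'M[R]_m) v x : qform L v != 0 ->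
  exists y t, bform L v y = 0 /\ x = y + t *: v.
Proof.
move=> Lv_neq0; exists (x - (bform L v x / qform L v) *: v), (bform L v x / qform L v).
by rewrite subrK bformDr -scaleN1r !bformZr divfK // mulN1r subrr.
Qed.

(* Induction on the dimension: a generalized eigenvector [v] splits the space
   into its line and its [L]-orthogonal hyperplane, on which both forms
   restrict without cross terms; the better of [v] and a maximizer on the
   hyperplane is a global maximizer. *)
Lemma rayleigh_max_exists k (A L : 'M[R]_k.+1) : A^T = A -> L^T = L -> posdef L ->
  exists2 x0, x0 != 0 & is_rayleigh_max A L x0.
Proof.
elim: k A L => [|k IH] A L sA sL pL.
  exists (const_mx 1); first by apply/eqP => /matrixP/(_ 0 0)/eqP; rewrite !mxE oner_eq0.
  move=> x; rewrite /qform /bform !mxE !big_ord1 !mxE !big_ord1 !mxE; lra.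
have [mu [v v_neq0 Av]] := geneigen_exists sA sL pL.
have Lv_gt0 : 0 < qform L v by apply: pL.
have u_neq0 : v^T *m L != 0.
  by apply: contraTneq Lv_gt0 => vL0; rewrite /qform /bform vL0 mul0mx mxE ltxx.
have [P [uP P_inj P_onto]] := hyperplane_param u_neq0.
have [|||z0 z0_neq0 z0_max] := IH (P^T *m A *m P) (P^T *m L *m P).
- by rewrite trmx_congr sA.
- by rewrite trmx_congr sL.
- exact: posdef_congr.
set y0 := P *m z0.
have y0_orth : bform L v y0 = 0 by apply/bform_eq0; rewrite /y0 mulmxA uP mul0mx.
have y0_max y : bform L v y = 0 -> qform A y * qform L y0 <= qform A y0 * qform L y.
  by move=> /bform_eq0/P_onto [z ->]; rewrite -!qform_mulmx.
have Ly0_gt0 : 0 < qform L y0.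
  by apply: pL; apply: contra z0_neq0 => /eqP/P_inj ->.
have Av_mu : qform A v = mu * qform L v by rewrite /qform (bform_eigen v Av).
have [Ay0_le|Ay0_gt] := lerP (qform A y0) (mu * qform L y0).
- exists v => // x; have [y [t [y_orth ->]]] := orth_decomp x (lt0r_neq0 Lv_gt0).
  rewrite (qform_geneigen_orthD _ sA sL Av y_orth) (qform_orthD _ sL y_orth) Av_mu.
  have Ly_ge0 := qform_ge0 y pL.
  have : qform A y <= mu * qform L y.
    rewrite -(ler_pM2r Ly0_gt0); apply: le_trans (y0_max _ y_orth) _.
    by rewrite mulrAC ler_wpM2r.
  nra.
- exists y0 => [|x]; first by apply: contraTneq Ly0_gt0 => ->; rewrite qformx0 ltxx.
  have [y [t [y_orth ->]]] := orth_decomp x (lt0r_neq0 Lv_gt0).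
  rewrite (qform_geneigen_orthD _ sA sL Av y_orth) (qform_orthD _ sL y_orth).
  have := y0_max _ y_orth; have := mulr_ge0 (sqr_ge0 t) (ltW Lv_gt0); nra.
Qed.

End RayleighMaximum.

Section RayleighEigen.
Variable R : rcfType.

Lemma eigvec_invmxE m (L : 'M[R]_m) : L \in unitmx -> forall W x lam,
  is_eigvec (invmx L *m W) x lam <-> x != 0 /\ W *m x = lam *: (L *m x).
Proof.
move=> Lu W x lam; rewrite /is_eigvec -mulmxA; split=> [[-> Wx]|[-> Wx]]; split=> //.
  by rewrite -[W *m x](mulKVmx Lu) Wx scalemxAr.
by rewrite Wx -scalemxAr mulKmx.
Qed.

Lemma rayleigh_maxP m (W L : 'M[R]_m) x0 : posdef L -> x0 != 0 ->
  is_rayleigh_max W L x0 <-> forall x, qform W x <= qform W x0 / qform L x0 * qform L x.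
Proof.
by move=> pL /pL Lx0_gt0; split=> x0_max x; have := x0_max x; rewrite mulrAC ler_pdivlMr.
Qed.

Lemma rayleigh_max_geneigen m (W L : 'M[R]_m) x0 : W^T = W -> L^T = L -> posdef L ->
  x0 != 0 -> is_rayleigh_max W L x0 ->
  W *m x0 = (qform W x0 / qform L x0) *: (L *m x0).
Proof.
move=> sW sL pL /pL Lx0_gt0 /(rayleigh_max_eigen sW sL) Wx0.
by rewrite mulrC -scalerA -Wx0 scalerA mulVf ?lt0r_neq0 // scale1r.
Qed.

Lemma rayleigh_max_top_eigvec m (W L : 'M[R]_m) g :
  W^T = W -> L^T = L -> posdef L -> g != 0 ->
  is_rayleigh_max W L g <->
  exists lam, is_largest_eigval (invmx L *m W) lam /\ is_eigvec (invmx L *m W) g lam.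
Proof.
case: m W L g => [|k] W L g sW sL pL g_neq0; first by rewrite flatmx0 eqxx in g_neq0.
have Lu := posdef_unitmx pL.
have eigvalE mu : is_eigval (invmx L *m W) mu ->
    exists2 x, 0 < qform L x & qform W x = mu * qform L x.
  by case=> x /(eigvec_invmxE Lu) [/pL Lx_gt0 Wx]; exists x => //; apply: bform_eigen.
split=> [g_max|[lam [[_ lam_max] /(eigvec_invmxE Lu) [_ Wg]]]].
- have g_eig : is_eigvec (invmx L *m W) g (qform W g / qform L g).
    by apply/eigvec_invmxE => //; split=> //; apply: rayleigh_max_geneigen.
  exists (qform W g / qform L g); split=> //; split=> [|mu /eigvalE [x Lx_gt0 Wx]].
    by exists g.
  by have := (rayleigh_maxP _ pL g_neq0).1 g_max x; rewrite Wx ler_pM2r.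
- have [x0 x0_neq0 x0_max] := rayleigh_max_exists sW sL pL.
  have x0_le : qform W x0 / qform L x0 <= lam.
    apply: lam_max; exists x0; apply/eigvec_invmxE => //; split=> //.
    exact: rayleigh_max_geneigen.
  apply/(rayleigh_maxP _ pL g_neq0) => x.
  rewrite /qform (bform_eigen g Wg) -/(qform L g) mulfK ?lt0r_neq0 ?pL //.
  apply: le_trans ((rayleigh_maxP _ pL x0_neq0).1 x0_max x) _.
  by rewrite ler_wpM2r // qform_ge0.
Qed.

Lemma constrained_min_rayleigh_max m (W L : 'M[R]_m) g : posdef L -> qform W g = 1 ->
  (forall h, qform W h = 1 -> qform L g <= qform L h) <-> is_rayleigh_max W L g.
Proof.
move=> pL Wg; rewrite /is_rayleigh_max Wg; split=> [g_min x|g_max h Wh]; last first.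
  by have := g_max h; rewrite Wh !mul1r.
rewrite mul1r; have [Wx_le0|Wx_gt0] := lerP (qform W x) 0.
  exact: le_trans (mulr_le0_ge0 Wx_le0 (qform_ge0 g pL)) (qform_ge0 x pL).
have s_gt0 : 0 < Num.sqrt (qform W x) by rewrite sqrtr_gt0.
have := g_min ((Num.sqrt (qform W x))^-1 *: x).
rewrite !qformZ exprVn (sqr_sqrtr (ltW Wx_gt0)) mulVf ?lt0r_neq0 // => /(_ erefl).
by move/(ler_wpM2l (ltW Wx_gt0)); rewrite mulrA mulfV ?lt0r_neq0 // mul1r.
Qed.

End RayleighEigen.

Section ReducedForms.
Variables (R : rcfType) (n : nat) (i : 'I_n).

Definition restr (g : 'I_n -> R) : 'cV[R]_n.-1 := \col_j g (lift i j).

Definition ext0 (x : 'cV[R]_n.-1) (u : 'I_n) : R :=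
  if unlift i u is Some j then x j 0 else 0.

Lemma ext0_pivot x : ext0 x i = 0.
Proof. by rewrite /ext0 unlift_none. Qed.

Lemma restr_ext0 x : restr (ext0 x) = x.
Proof. by apply/matrixP => j k; rewrite ord1 mxE /ext0 liftK. Qed.

Lemma trmx_row'_col' (M : 'M[R]_n) : (row' i (col' i M))^T = row' i (col' i M^T).
Proof. by apply/matrixP => a b; rewrite !mxE. Qed.

Lemma qform_row'_col' (M : 'M[R]_n) g : g i = 0 ->
  qform (row' i (col' i M)) (restr g) = \sum_a \sum_b g a * M a b * g b.
Proof.
move=> gi; rewrite qform_sum [RHS](bigD1_ord i) //= [X in _ = X + _]big1 ?add0r; last first.
  by move=> b _; rewrite gi !mul0r.
apply: eq_bigr => a _; rewrite [RHS](bigD1_ord i) //= gi mulr0 add0r.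
by apply: eq_bigr => b _; rewrite !mxE.
Qed.

End ReducedForms.

Section Laplacian.
Variables (R : rcfType) (n : nat) (wE : 'I_n -> 'I_n -> R).
Hypothesis wE_sym : forall u v, wE u v = wE v u.

Lemma laplacian_sym : (laplacian wE)^T = laplacian wE.
Proof. by apply/matrixP => a b; rewrite /laplacian !mxE eq_sym wE_sym; case: eqP => // ->. Qed.

Lemma laplacian_qform g :
  2 * (\sum_j \sum_k g j * laplacian wE j k * g k) =
  \sum_j \sum_k wE j k * (g k - g j) ^+ 2.
Proof.
have row_sum j : \sum_k g j * laplacian wE j k * g k =
    \sum_k (wE j k * g j ^+ 2 - g j * wE j k * g k).
  under eq_bigr => k _ do rewrite /laplacian mxE mulrBr mulrBl.
  rewrite !sumrB; congr (_ - _).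
  rewrite (bigD1 j) //= eqxx [X in _ + X]big1 ?addr0 => [|k]; last first.
    by rewrite eq_sym => /negbTE ->; rewrite mulr0 mul0r.
  by rewrite mulr_sumr mulr_suml; apply: eq_bigr => k _; ring.
have swap : \sum_j \sum_k wE j k * g k ^+ 2 = \sum_j \sum_k wE j k * g j ^+ 2.
  by rewrite exchange_big; apply: eq_bigr => j _; apply: eq_bigr => k _; rewrite wE_sym.
symmetry; rewrite (eq_bigr (fun j => \sum_k (wE j k * g k ^+ 2 - wE j k * g j ^+ 2) +
    2 * \sum_k (wE j k * g j ^+ 2 - g j * wE j k * g k))); last first.
  by move=> j _; rewrite mulr_sumr -big_split; apply: eq_bigr => k _ /=; ring.
rewrite big_split /= -mulr_sumr.
have -> : \sum_j \sum_k (wE j k * g k ^+ 2 - wE j k * g j ^+ 2) = 0.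
  by under eq_bigr => j _ do rewrite sumrB; rewrite sumrB swap subrr.
by rewrite add0r; congr (_ * _); apply: eq_bigr => j _; rewrite row_sum.
Qed.

End Laplacian.

Section ReducedLaplacian.
Variables (R : rcfType) (n : nat) (wE : 'I_n -> 'I_n -> R) (i : 'I_n).
Hypothesis wE_sym : forall u v, wE u v = wE v u.
Hypothesis wE_ge0 : forall u v, 0 <= wE u v.

Lemma Lred_sym : (Lred wE i)^T = Lred wE i.
Proof. by rewrite /Lred trmx_row'_col' laplacian_sym. Qed.

Lemma Lred_posdef : pos_connected wE -> posdef (Lred wE i).
Proof.
move=> wE_conn x x_neq0; set g := ext0 i x.
have Lx : 2 * qform (Lred wE i) x = \sum_j \sum_k wE j k * (g k - g j) ^+ 2.
  by rewrite -[x in LHS](restr_ext0 i) /Lred qform_row'_col' ?ext0_pivot ?laplacian_qform.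
have terms_ge0 j k : 0 <= wE j k * (g k - g j) ^+ 2 by rewrite mulr_ge0 ?sqr_ge0.
have rows_ge0 j : 0 <= \sum_k wE j k * (g k - g j) ^+ 2 by apply: sumr_ge0.
have Lx_ge0 : 0 <= qform (Lred wE i) x.
  by rewrite -(pmulr_rge0 _ (ltr0Sn _ 1)) Lx sumr_ge0.
rewrite lt_def Lx_ge0 andbT; apply: contra x_neq0 => /eqP Lx0.
have sum0 : \sum_j \sum_k wE j k * (g k - g j) ^+ 2 = 0 by rewrite -Lx Lx0 mulr0.
have edge_const j k : 0 < wE j k -> g j = g k.
  move=> wjk; have row0 : \sum_k wE j k * (g k - g j) ^+ 2 = 0.
    exact: (psumr_eq0P (fun j _ => rows_ge0 j) sum0).
  have /eqP : wE j k * (g k - g j) ^+ 2 = 0.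
    exact: (psumr_eq0P (fun k _ => terms_ge0 j k) row0).
  by rewrite mulf_eq0 gt_eqF //= sqrf_eq0 subr_eq0 => /eqP.
have g_closed : closed (fun a b => 0 < wE a b) [pred u | g u == 0].
  by move=> a b /edge_const; rewrite !inE => ->.
have g0 u : g u = 0.
  have := closed_connect g_closed (wE_conn i u).
  by rewrite !inE /g ext0_pivot eqxx => /esym/eqP.
by apply/eqP; rewrite -(restr_ext0 i x) -/g; apply/matrixP => j k; rewrite !mxE g0.
Qed.

End ReducedLaplacian.

Section VertexWeights.
Variables (R : rcfType) (n : nat) (wV : 'I_n -> R) (i : 'I_n).
Hypothesis wV_ge0 : forall u, 0 <= wV u.

Lemma WVred_sym : (WVred wV i)^T = WVred wV i.
Proof. by rewrite /WVred trmx_row'_col' tr_diag_mx. Qed.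

Lemma wnorm_eq1 g : g i = 0 ->
  wnorm wV g = 1 <-> qform (WVred wV i) (restr i g) = 1.
Proof.
move=> gi; have -> : qform (WVred wV i) (restr i g) = \sum_u wV u * g u ^+ 2.
  rewrite /WVred qform_row'_col' //; apply: eq_bigr => a _.
  rewrite (bigD1 a) //= big1 ?addr0 => [|b /negbTE ba]; last first.
    by rewrite !mxE eq_sym ba mulr0 mul0r.
  by rewrite !mxE eqxx mulr1n; ring.
have norm2_ge0 : 0 <= \sum_u wV u * g u ^+ 2.
  by apply: sumr_ge0 => u _; rewrite mulr_ge0 ?sqr_ge0.
rewrite /wnorm; split=> [norm1|->]; last exact: sqrtr1.
by rewrite -(sqr_sqrtr norm2_ge0) norm1 expr1n.
Qed.

End VertexWeights.

Section Energy.
Variables (R : rcfType) (n : nat) (e : rel 'I_n) (wE : 'I_n -> 'I_n -> R).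
Hypothesis wE_sym : forall u v, wE u v = wE v u.
Hypothesis wE_supp : forall u v, ~~ e u v -> wE u v = 0.

Lemma energy_double g :
  2 * energy e wE g = \sum_j \sum_k wE j k * (g k - g j) ^+ 2.
Proof.
pose F (j k : 'I_n) := wE j k * (g k - g j) ^+ 2.
have upper : energy e wE g = \sum_(j < n) \sum_(k < n) (if (j < k)%N then F j k else 0).
  apply: eq_bigr => j _; rewrite -big_mkcond /= [RHS](bigID (e j)) /=.
  rewrite [X in _ = _ + X]big1 ?addr0 // => k /andP [_ /wE_supp wjk].
  by rewrite /F wjk mul0r.
have halves : \sum_j \sum_k F j k =
    \sum_(j < n) \sum_(k < n) (if (j < k)%N then F j k else 0) +
    \sum_(j < n) \sum_(k < n) (if (k < j)%N then F j k else 0).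
  rewrite -big_split; apply: eq_bigr => j _; rewrite -big_split; apply: eq_bigr => k _ /=.
  case: ltngtP => [||/val_inj ->]; rewrite ?addr0 ?add0r //.
  by rewrite /F subrr expr0n mulr0.
rewrite [RHS]halves -upper [X in _ + X]exchange_big /= mulr2n mulrDl mul1r.
congr (_ + _); rewrite upper; apply: eq_bigr => j _; apply: eq_bigr => k _.
by case: ifP => // _; rewrite /F wE_sym; ring.
Qed.

Lemma energy_qform (i : 'I_n) g : g i = 0 ->
  energy e wE g = qform (Lred wE i) (restr i g).
Proof.
move=> gi; apply: (@mulfI _ 2); first by rewrite pnatr_eq0.
by rewrite energy_double /Lred qform_row'_col' // laplacian_qform.
Qed.

Lemma min_energy_iff_qform_min (i : 'I_n) (wV : 'I_n -> R) g :
  (forall u, 0 <= wV u) -> g i = 0 ->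
  (forall h, h i = 0 -> wnorm wV h = 1 -> energy e wE g <= energy e wE h) <->
  (forall y, qform (WVred wV i) y = 1 ->
     qform (Lred wE i) (restr i g) <= qform (Lred wE i) y).
Proof.
move=> wV_ge0 gi; rewrite (energy_qform gi).
split=> [g_min y Wy|g_min h hi /(wnorm_eq1 wV_ge0 hi) Wh]; last first.
  by rewrite (energy_qform hi); apply: g_min.
have := g_min (ext0 i y) (ext0_pivot i y).
rewrite (energy_qform (ext0_pivot i y)) restr_ext0; apply.
by apply/(wnorm_eq1 wV_ge0 (ext0_pivot i y)); rewrite restr_ext0.
Qed.

End Energy.

Theorem lemma6 (R : rcfType) (n : nat) (e : rel 'I_n) (i : 'I_n)
  (wE : 'I_n -> 'I_n -> R) (wV : 'I_n -> R) :
  (forall u v, e u v = e v u) ->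
  (forall u v, wE u v = wE v u) ->
  (forall u v, 0 <= wE u v) ->
  (forall u v, ~~ e u v -> wE u v = 0) ->
  (forall u, 0 <= wV u) ->
  (exists u, wV u != 0) ->
  pos_connected wE ->
  forall g : 'I_n -> R, g i = 0 -> wnorm wV g = 1 ->
  ((forall h : 'I_n -> R, h i = 0 -> wnorm wV h = 1 ->
      energy e wE g <= energy e wE h)
   <->
   exists lam : R,
     is_largest_eigval (invmx (Lred wE i) *m WVred wV i) lam /\
     is_eigvec (invmx (Lred wE i) *m WVred wV i) (\col_j g (lift i j)) lam).
Proof.
move=> _ wE_sym wE_ge0 wE_supp wV_ge0 _ wE_conn g gi /(wnorm_eq1 wV_ge0 gi) Wg.
have pL := Lred_posdef i wE_sym wE_ge0 wE_conn.
rewrite (min_energy_iff_qform_min wE_sym wE_supp wV_ge0 gi).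
rewrite (constrained_min_rayleigh_max pL Wg).
apply: (rayleigh_max_top_eigvec (WVred_sym wV i) (Lred_sym i wE_sym) pL).
by apply: contra_eqN Wg => /eqP ->; rewrite qformx0 eq_sym oner_eq0.
Qed.
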